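(* Let $n\in\mathbb{Z}$ with $|n|\geq1$, $\alpha>0$, $R>0$ and $-\frac{r_0^2+n^2}{2R^2}<\kappa<\alpha^{-1}-\frac{r_0^2+n^2}{2R^2}$. Then there exists a constant $C_2>0$ such that $\langle\gamma_\kappa'(u),u\rangle<-C_2<0$ for all $u\in\mathcal{M}$.
   Context: $r_0\approx2.404825$ is the first positive zero of the Bessel function $J_0$. $H$ is the completion of $\{u\in C^1[0,R]: u(0)=0=u(R)\}$ with respect to the inner product $(u,\tilde u)=\int_0^R\{ru_r\tilde u_r+\frac1r u\tilde u\}dr$. $\gamma_\kappa(u)=\frac12\int_0^R\{ru_r^2+\frac{n^2}{r}u^2-2(\alpha^{-1}-\kappa)ru^2+2\alpha^{-1}\frac{ru^2}{1+\alpha u^2}\}dr$, $\gamma_\kappa'$ is its Fréchet derivative, $\langle\cdot,\cdot\rangle$ the duality between $H^{-1}$ and $H$, and $\mathcal{M}=\{u\in H\setminus\{0\}:\gamma_\kappa(u)=0\}$. *)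

From Stdlib Require Import Reals Lra ZArith.
From Coquelicot Require Import Coquelicot.
Open Scope R_scope.

Definition J0 (x : R) : R :=
  Series (fun m => (-1) ^ m / (INR (fact m)) ^ 2 * (x / 2) ^ (2 * m)).

Definition first_pos_zero_J0 (r0 : R) : Prop :=
  0 < r0 /\ J0 r0 = 0 /\ (forall x, 0 < x < r0 -> J0 x <> 0).

(** C^1 functions (any C^1[0,R] function extends to a C^1 function on the
    whole line; only the values on [0,R] matter below). *)
Definition C1 (u : R -> R) : Prop :=
  (forall x, ex_derive u x) /\ (forall x, continuous (Derive u) x).

Definition preH (R0 : R) (u : R -> R) : Prop :=
  C1 u /\ u 0 = 0 /\ u R0 = 0.

Definition normH2 (R0 : R) (u : R -> R) : R :=
  RInt (fun r => r * (Derive u r) ^ 2 + / r * (u r) ^ 2) 0 R0.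

(** H = completion of preH w.r.t. the norm above.  An element of H is
    represented by a Cauchy sequence of elements of preH. *)
Definition Hseq (R0 : R) (s : nat -> R -> R) : Prop :=
  (forall k, preH R0 (s k)) /\
  (forall eps, 0 < eps -> exists N, forall k l, (N <= k)%nat -> (N <= l)%nat ->
     normH2 R0 (fun x => s k x - s l x) < eps).

Definition H_nonzero (R0 : R) (s : nat -> R -> R) : Prop :=
  ~ is_lim_seq (fun k => normH2 R0 (s k)) 0.

Definition gamma (n : Z) (alpha kappa R0 : R) (u : R -> R) : R :=
  / 2 * RInt (fun r =>
      r * (Derive u r) ^ 2 + (IZR n) ^ 2 / r * (u r) ^ 2
      - 2 * (/ alpha - kappa) * r * (u r) ^ 2
      + 2 * / alpha * (r * (u r) ^ 2 / (1 + alpha * (u r) ^ 2))) 0 R0.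

(** gamma_kappa on H: its (continuous) extension, the limit along a
    representing Cauchy sequence. *)
Definition gammaH (n : Z) (alpha kappa R0 : R) (s : nat -> R -> R) : R :=
  real (Lim_seq (fun k => gamma n alpha kappa R0 (s k))).

(** <gamma_kappa'(u), u> : the Frechet derivative of gamma_kappa at u applied
    to u, i.e. d/dt gamma_kappa((1+t) u) at t = 0. *)
Definition dgamma_u_u (n : Z) (alpha kappa R0 : R) (s : nat -> R -> R) : R :=
  Derive (fun t => gammaH n alpha kappa R0 (fun k x => (1 + t) * s k x)) 0.

Definition in_M (n : Z) (alpha kappa R0 : R) (s : nat -> R -> R) : Prop :=
  Hseq R0 s /\ H_nonzero R0 s /\ gammaH n alpha kappa R0 s = 0.

From Stdlib Require Import Reals ZArith Lra Psatz FunctionalExtensionality.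
From Coquelicot Require Import Coquelicot.
Open Scope R_scope.

(* Write [D = int r u_r^2], [I = int u^2 / r], [B = int r u^2], [N1 = int r u^2 / (1 + alpha u^2)]
   and [Np = int r u^2 / (1 + alpha u^2)^2].  Along a Cauchy sequence representing [u] all of them
   converge, and scaling [u] by [1 + t] only rescales [D], [I], [B] and the saturation parameter, so
   [<gamma'(u), u> = 2 gamma(u) - 2/alpha (N1 - Np)], where [N1 - Np = alpha int r u^4 / (1 + alpha
   u^2)^2].  A Poincare inequality [D + I >= 10/R0^2 B], with [10 > r0^2 + 1], makes
   [D + n^2 I + 2 kappa B >= c |u|^2]; on [M] this form equals [2/alpha (B - N1)].  As
   [u^2 <= |u|^2] pointwise, [B - N1] is at most [alpha R0^2 |u|^4] and at most
   [(1 + alpha |u|^2) (N1 - Np)]: the first bound keeps [|u|] away from 0 on [M], the second then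
   bounds [N1 - Np] below uniformly. *)

Lemma continuous_pow_comp (f : R -> R) (m : nat) x :
  continuous f x -> continuous (fun y => f y ^ m) x.
Proof.
  intros Hf. apply (continuous_comp f (fun y => y ^ m)); auto.
  apply (ex_derive_continuous (fun y => y ^ m)). auto_derive. auto.
Qed.

Lemma preH_ex_derive R0 u x : preH R0 u -> ex_derive u x.
Proof. intros [[Hd _] _]. apply Hd. Qed.

Lemma preH_continuous R0 u x : preH R0 u -> continuous u x.
Proof. intros Hu. apply (ex_derive_continuous u), (preH_ex_derive R0), Hu. Qed.

Lemma preH_continuous_Derive R0 u x : preH R0 u -> continuous (Derive u) x.
Proof. intros [[_ Hc] _]. apply Hc. Qed.

(* At [r = 0] the integrand is [/ 0 * 0 = 0], and [u r ^ 2 / r = u r * (u r / r)] tends to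
   [0 * u'(0)] there. *)
Lemma continuous_inv_mul_sqr R0 u x : preH R0 u -> continuous (fun r => / r * u r ^ 2) x.
Proof.
  intros Hu.
  destruct (Req_dec x 0) as [->|Hx].
  2: { apply (continuous_mult (fun r => / r) (fun r => u r ^ 2)).
       - apply (continuous_comp (fun r => r) Rinv); [apply continuous_id|].
         apply continuity_pt_filterlim, continuity_pt_inv; [apply continuity_pt_id|auto].
       - apply continuous_pow_comp, (preH_continuous R0), Hu. }
  destruct Hu as [HC1 [Hu0 _]].
  set (q := fun r => if Req_EM_T r 0 then Derive u 0 else u r / r).
  apply (continuous_ext (fun r => u r * q r)).
  { intros r. change (u r * q r = / r * u r ^ 2). unfold q.
    destruct (Req_EM_T r 0) as [->|Hr].
    - rewrite Hu0, Rinv_0. ring.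
    - field. exact Hr. }
  apply (continuous_mult u q).
  { apply (ex_derive_continuous u), HC1. }
  apply continuity_pt_filterlim. intros eps Heps.
  destruct HC1 as [Hd _].
  pose proof (proj1 (is_derive_Reals _ _ _) (Derive_correct u 0 (Hd 0)) eps Heps) as [delta Hdelta].
  exists delta. split; [apply cond_pos|].
  intros h [[_ Hh0] Hh]. simpl in *. unfold Rdist in *. rewrite Rminus_0_r in Hh.
  specialize (Hdelta h (not_eq_sym Hh0) Hh). rewrite Rplus_0_l, Hu0, Rminus_0_r in Hdelta.
  unfold q. destruct (Req_EM_T h 0) as [E|_]; [congruence|].
  destruct (Req_EM_T 0 0) as [_|E]; [exact Hdelta|congruence].
Qed.

Ltac continuous_preH Hu :=
  lazymatch goal with
  | |- continuous (fun y => / y * _ ^ 2) _ => apply (continuous_inv_mul_sqr _ _ _ Hu)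
  | |- continuous (fun y => @?f y + @?g y) _ => apply (continuous_plus f g); continuous_preH Hu
  | |- continuous (fun y => @?f y - @?g y) _ => apply (continuous_minus f g); continuous_preH Hu
  | |- continuous (fun y => @?f y * @?g y) _ => apply (continuous_mult f g); continuous_preH Hu
  | |- continuous (fun y => @?f y ^ ?m) _ => apply (continuous_pow_comp f m); continuous_preH Hu
  | |- continuous (fun y => Derive _ y) _ => apply (preH_continuous_Derive _ _ _ Hu)
  | |- continuous (fun y => y) _ => apply continuous_id
  | |- continuous _ _ => first [apply (preH_continuous _ _ _ Hu) | apply continuous_const | idtac]
  end.

Lemma RInt_Rplus (f g : R -> R) a b : ex_RInt f a b -> ex_RInt g a b ->
  RInt (fun x => f x + g x) a b = RInt f a b + RInt g a b.
Proof. exact (RInt_plus f g a b). Qed.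

Lemma RInt_Rminus (f g : R -> R) a b : ex_RInt f a b -> ex_RInt g a b ->
  RInt (fun x => f x - g x) a b = RInt f a b - RInt g a b.
Proof. exact (RInt_minus f g a b). Qed.

Lemma RInt_Rmult (f : R -> R) c a b : ex_RInt f a b ->
  RInt (fun x => c * f x) a b = c * RInt f a b.
Proof. exact (RInt_scal f a b c). Qed.

Lemma RInt_Rext (f g : R -> R) a b : (forall x, Rmin a b < x < Rmax a b -> f x = g x) ->
  RInt f a b = RInt g a b.
Proof. exact (RInt_ext f g a b). Qed.

Lemma RInt_Rchasles (f : R -> R) a b c : ex_RInt f a b -> ex_RInt f b c ->
  RInt f a b + RInt f b c = RInt f a c.
Proof. exact (RInt_Chasles f a b c). Qed.

Lemma ex_RInt_Rmult (f : R -> R) c a b : ex_RInt f a b -> ex_RInt (fun x => c * f x) a b.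
Proof. exact (ex_RInt_scal f a b c). Qed.

Lemma ex_RInt_Rminus (f g : R -> R) a b : ex_RInt f a b -> ex_RInt g a b ->
  ex_RInt (fun x => f x - g x) a b.
Proof. exact (ex_RInt_minus f g a b). Qed.

Lemma ex_RInt_Rcontinuous (f : R -> R) a b :
  a <= b -> (forall x, a <= x <= b -> continuous f x) -> ex_RInt f a b.
Proof.
  intros Hab Hf. apply (ex_RInt_continuous (V := R_CompleteNormedModule)).
  rewrite Rmin_left, Rmax_right; auto.
Qed.

Ltac ex_RInt_lin :=
  lazymatch goal with
  | |- ex_RInt (fun x => @?f x + @?g x) _ _ => apply (ex_RInt_plus f g); ex_RInt_lin
  | |- ex_RInt (fun x => @?f x - @?g x) _ _ => apply (ex_RInt_minus f g); ex_RInt_lin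
  | |- ex_RInt (fun x => _ * _) _ _ => first [assumption | apply ex_RInt_Rmult; ex_RInt_lin]
  | _ => auto
  end.

(** * Weighted integrals of a single function *)

Definition dirichlet (R0 : R) (u : R -> R) : R := RInt (fun r => r * Derive u r ^ 2) 0 R0.
Definition hardy (R0 : R) (u : R -> R) : R := RInt (fun r => / r * u r ^ 2) 0 R0.
Definition wint (R0 : R) (phi : R -> R) (u : R -> R) : R := RInt (fun r => r * phi (u r)) 0 R0.
Definition mass (R0 : R) : (R -> R) -> R := wint R0 (fun x => x ^ 2).

Lemma amgm_weighted w a b : 0 < w -> 2 * a * b <= w * b ^ 2 + / w * a ^ 2.
Proof.
  intros Hw.
  assert (E : w * b ^ 2 + / w * a ^ 2 - 2 * a * b = / w * (w * b - a) ^ 2) by (field; lra).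
  assert (0 <= / w * (w * b - a) ^ 2).
  { apply Rmult_le_pos; [apply Rlt_le, Rinv_0_lt_compat; lra | apply pow2_ge_0]. }
  lra.
Qed.

Lemma is_derive_sqr_comp (u : R -> R) x :
  ex_derive u x -> is_derive (fun r => u r ^ 2) x (2 * u x * Derive u x).
Proof.
  intros Hd. apply (is_derive_ext (fun r => u r * u r)); [intros; simpl; ring|].
  replace (2 * u x * Derive u x) with (Derive u x * u x + u x * Derive u x) by ring.
  apply (is_derive_mult u u); try apply Derive_correct; auto.
  intros; apply Rmult_comm.
Qed.

(* Multiplier for [poincare]: [G u^2] vanishes at both ends, so [(G u^2)'] integrates to 0, and
   [poincare_weight_pointwise] completes a square. *)
Definition poincare_den (S r : R) := 20 * S ^ 4 - 25 * S ^ 2 * r ^ 2 + 6 * r ^ 4.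
Definition poincare_num (S r : R) := 20 * S ^ 4 - 75 * S ^ 2 * r ^ 2 + 30 * r ^ 4.
Definition poincare_weight (S r : R) := poincare_num S r / poincare_den S r.
Definition poincare_weight' (S r : R) :=
  ((-150 * S ^ 2 * r + 120 * r ^ 3) * poincare_den S r
   - poincare_num S r * (-50 * S ^ 2 * r + 24 * r ^ 3)) / poincare_den S r ^ 2.

Lemma poincare_den_pos S r : 0 < S -> 0 <= r <= S -> 0 < poincare_den S r.
Proof.
  intros HS Hr. unfold poincare_den.
  replace (20 * S ^ 4 - 25 * S ^ 2 * r ^ 2 + 6 * r ^ 4)
    with ((S ^ 2 - r ^ 2) * (20 * S ^ 2 - 5 * r ^ 2) + r ^ 4) by ring.
  assert (0 <= S ^ 2 - r ^ 2) by nra.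
  assert (0 < 20 * S ^ 2 - 5 * r ^ 2) by nra.
  destruct (Req_dec r 0) as [->|Hr0]; [simpl; nra|].
  assert (0 < r ^ 4) by (apply pow_lt; lra).
  nra.
Qed.

Lemma is_derive_poincare_weight S r : 0 < S -> 0 <= r <= S ->
  is_derive (poincare_weight S) r (poincare_weight' S r).
Proof.
  intros HS Hr. pose proof (poincare_den_pos S r HS Hr).
  unfold poincare_weight, poincare_weight', poincare_num, poincare_den in *.
  auto_derive; [lra | field; lra].
Qed.

Lemma continuous_poincare_weight' S r : 0 < S -> 0 <= r <= S ->
  continuous (poincare_weight' S) r.
Proof.
  intros HS Hr. pose proof (poincare_den_pos S r HS Hr).
  apply (ex_derive_continuous (poincare_weight' S)).
  unfold poincare_weight', poincare_num, poincare_den in *.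
  auto_derive. simpl in *. nra.
Qed.

Lemma poincare_weight_pointwise S r p x : 0 < S -> 0 < r < S ->
  poincare_weight' S r * x ^ 2 + poincare_weight S r * (2 * x * p)
  <= (r * p ^ 2 + / r * x ^ 2) - 10 / S ^ 2 * (r * x ^ 2).
Proof.
  intros HS Hr. assert (HP : 0 < poincare_den S r) by (apply poincare_den_pos; lra).
  assert (E : (r * p ^ 2 + / r * x ^ 2) - 10 / S ^ 2 * (r * x ^ 2)
     - (poincare_weight' S r * x ^ 2 + poincare_weight S r * (2 * x * p))
     = r * (p - poincare_weight S r * x / r) ^ 2
       + r ^ 3 * (106 * S ^ 2 - 60 * r ^ 2) / (S ^ 2 * poincare_den S r) * x ^ 2).
  { unfold poincare_weight', poincare_weight, poincare_num. unfold poincare_den in *.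
    field. repeat split; lra. }
  assert (0 <= r * (p - poincare_weight S r * x / r) ^ 2)
    by (apply Rmult_le_pos; [lra | apply pow2_ge_0]).
  assert (0 <= r ^ 3 * (106 * S ^ 2 - 60 * r ^ 2) / (S ^ 2 * poincare_den S r) * x ^ 2).
  { apply Rmult_le_pos; [|apply pow2_ge_0]. apply Rmult_le_pos.
    - apply Rmult_le_pos; [apply pow_le; lra | nra].
    - apply Rlt_le, Rinv_0_lt_compat. apply Rmult_lt_0_compat; nra. }
  lra.
Qed.

(* [sat a sigma (u r)] is the saturable integrand at the scaled function [sqrt sigma * u];
   [sat_deriv a] is its [sigma]-derivative at [sigma = 1]. *)
Definition sat (a sigma x : R) : R := sigma * x ^ 2 / (1 + a * (sigma * x ^ 2)).
Definition sat_deriv (a x : R) : R := x ^ 2 / (1 + a * x ^ 2) ^ 2.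

Lemma sat_den_pos a sigma x : 0 <= a -> 0 <= sigma -> 0 < 1 + a * (sigma * x ^ 2).
Proof. intros. assert (0 <= x ^ 2) by apply pow2_ge_0. assert (0 <= sigma * x ^ 2) by nra. nra. Qed.

Lemma continuous_sat a sigma x : 0 <= a -> 0 <= sigma -> continuous (sat a sigma) x.
Proof.
  intros Ha Hs. pose proof (sat_den_pos a sigma x Ha Hs).
  apply (ex_derive_continuous (sat a sigma)). unfold sat. auto_derive. lra.
Qed.

Lemma continuous_sat_deriv a x : 0 <= a -> continuous (sat_deriv a) x.
Proof.
  intros Ha. pose proof (sat_den_pos a 1 x Ha Rle_0_1). rewrite Rmult_1_l in H.
  apply (ex_derive_continuous (sat_deriv a)). unfold sat_deriv. auto_derive.
  simpl in *. nra.
Qed.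

Lemma continuous_sqr x : continuous (fun y => y ^ 2) x.
Proof. apply continuous_pow_comp, continuous_id. Qed.

Definition quad_part (n : Z) (a k R0 : R) (u : R -> R) : R :=
  dirichlet R0 u + IZR n ^ 2 * hardy R0 u - 2 * (/ a - k) * mass R0 u.

Section WeightedIntegrals.

Variables (R0 : R) (u : R -> R).
Hypotheses (HR : 0 < R0) (Hu : preH R0 u).

Lemma ex_RInt_normH2 a b : a <= b -> ex_RInt (fun r => r * Derive u r ^ 2 + / r * u r ^ 2) a b.
Proof. intros Hab. apply ex_RInt_Rcontinuous; auto. intros; continuous_preH Hu. Qed.

Lemma ex_RInt_dirichlet : ex_RInt (fun r => r * Derive u r ^ 2) 0 R0.
Proof. apply ex_RInt_Rcontinuous; [lra|]. intros; continuous_preH Hu. Qed.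

Lemma ex_RInt_hardy : ex_RInt (fun r => / r * u r ^ 2) 0 R0.
Proof. apply ex_RInt_Rcontinuous; [lra|]. intros; continuous_preH Hu. Qed.

Lemma ex_RInt_wint phi : (forall x, continuous phi x) -> ex_RInt (fun r => r * phi (u r)) 0 R0.
Proof.
  intros Hphi. apply ex_RInt_Rcontinuous; [lra|]. intros x _.
  apply (continuous_mult (fun r => r) (fun r => phi (u r))); [apply continuous_id|].
  apply continuous_comp; [apply (preH_continuous R0), Hu | apply Hphi].
Qed.

Lemma normH2_split : normH2 R0 u = dirichlet R0 u + hardy R0 u.
Proof. apply RInt_Rplus; [apply ex_RInt_dirichlet | apply ex_RInt_hardy]. Qed.

Lemma dirichlet_ge0 : 0 <= dirichlet R0 u.
Proof.
  apply RInt_ge_0; [lra | apply ex_RInt_dirichlet |].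
  intros; apply Rmult_le_pos; [lra | apply pow2_ge_0].
Qed.

Lemma hardy_ge0 : 0 <= hardy R0 u.
Proof.
  apply RInt_ge_0; [lra | apply ex_RInt_hardy |].
  intros; apply Rmult_le_pos; [apply Rlt_le, Rinv_0_lt_compat; lra | apply pow2_ge_0].
Qed.

Lemma normH2_ge0 : 0 <= normH2 R0 u.
Proof. rewrite normH2_split. pose proof dirichlet_ge0. pose proof hardy_ge0. lra. Qed.

Lemma wint_ge0 phi : (forall x, continuous phi x) -> (forall x, 0 <= phi x) -> 0 <= wint R0 phi u.
Proof.
  intros Hc Hphi. apply RInt_ge_0; [lra | apply ex_RInt_wint, Hc |].
  intros; apply Rmult_le_pos; [lra | apply Hphi].
Qed.

(* [u x ^ 2 = int_0^x 2 u u'], and [2 u u' <= r u'^2 + u^2 / r]. *)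
Lemma sqr_le_normH2 x : 0 <= x <= R0 -> u x ^ 2 <= normH2 R0 u.
Proof.
  intros Hx. destruct Hu as [_ [Hu0 _]].
  assert (Hint : is_RInt (fun r => 2 * u r * Derive u r) 0 x (minus (u x ^ 2) (u 0 ^ 2))).
  { apply (is_RInt_derive (fun r => u r ^ 2)).
    - intros y _. apply is_derive_sqr_comp, (preH_ex_derive R0), Hu.
    - intros y _. continuous_preH Hu. }
  apply (is_RInt_unique (V := R_CompleteNormedModule)) in Hint. rewrite Hu0 in Hint.
  replace (u x ^ 2) with (RInt (fun r => 2 * u r * Derive u r) 0 x)
    by (rewrite Hint; unfold minus, plus, opp; simpl; ring).
  unfold normH2.
  rewrite <- (RInt_Rchasles (fun r => r * Derive u r ^ 2 + / r * u r ^ 2) 0 x R0)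
    by (apply ex_RInt_normH2; lra).
  assert (0 <= RInt (fun r => r * Derive u r ^ 2 + / r * u r ^ 2) x R0).
  { apply RInt_ge_0; [lra | apply ex_RInt_normH2; lra |]. intros y Hy.
    apply Rplus_le_le_0_compat; apply Rmult_le_pos; try apply pow2_ge_0; [lra|].
    apply Rlt_le, Rinv_0_lt_compat; lra. }
  assert (RInt (fun r => 2 * u r * Derive u r) 0 x
          <= RInt (fun r => r * Derive u r ^ 2 + / r * u r ^ 2) 0 x).
  { apply RInt_le; [lra | | apply ex_RInt_normH2; lra |].
    - apply ex_RInt_Rcontinuous; [lra|]. intros; continuous_preH Hu.
    - intros y Hy. apply amgm_weighted. lra. }
  lra.
Qed.

Lemma mass_le_hardy : mass R0 u <= R0 ^ 2 * hardy R0 u.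
Proof.
  unfold mass, wint, hardy. rewrite <- RInt_Rmult by apply ex_RInt_hardy.
  apply RInt_le;
    [lra | apply (ex_RInt_wint (fun x => x ^ 2)), continuous_sqr
     | apply ex_RInt_Rmult, ex_RInt_hardy |].
  intros r Hr.
  replace (R0 ^ 2 * (/ r * u r ^ 2)) with (R0 ^ 2 / r ^ 2 * (r * u r ^ 2)) by (field; lra).
  rewrite <- (Rmult_1_l (r * u r ^ 2)) at 1.
  apply Rmult_le_compat_r; [apply Rmult_le_pos; [lra | apply pow2_ge_0]|].
  apply Rmult_le_reg_r with (r ^ 2); [apply pow_lt; lra|].
  unfold Rdiv. rewrite Rmult_assoc, Rinv_l by (apply pow_nonzero; lra). nra.
Qed.

(* The sharp constant would be [j_{1,1}^2 ~ 14.68]; [10] is enough since it exceeds [r0^2 + 1]. *)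
Lemma poincare : 10 / R0 ^ 2 * mass R0 u <= normH2 R0 u.
Proof.
  destruct Hu as [_ [Hu0 HuR]].
  set (G := poincare_weight R0). set (G' := poincare_weight' R0).
  set (f := fun r => G' r * u r ^ 2 + G r * (2 * u r * Derive u r)).
  assert (Hcf : forall y, 0 <= y <= R0 -> continuous f y).
  { intros y Hy. unfold f.
    apply (continuous_plus (fun r => G' r * u r ^ 2) (fun r => G r * (2 * u r * Derive u r))).
    - apply (continuous_mult G' (fun r => u r ^ 2)); [apply continuous_poincare_weight'; lra|].
      continuous_preH Hu.
    - apply (continuous_mult G (fun r => 2 * u r * Derive u r)); [|continuous_preH Hu].
      apply (ex_derive_continuous G). eexists. apply is_derive_poincare_weight; lra. }
  assert (Hf : ex_RInt f 0 R0) by (apply ex_RInt_Rcontinuous; [lra | exact Hcf]).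
  assert (Hzero : RInt f 0 R0 = 0).
  { assert (Hint : is_RInt f 0 R0 (minus (G R0 * u R0 ^ 2) (G 0 * u 0 ^ 2))).
    { apply (is_RInt_derive (fun r => G r * u r ^ 2)).
      - intros y Hy. rewrite Rmin_left, Rmax_right in Hy by lra.
        apply (is_derive_mult G (fun r => u r ^ 2)).
        + apply is_derive_poincare_weight; lra.
        + apply is_derive_sqr_comp, (preH_ex_derive R0), Hu.
        + intros; apply Rmult_comm.
      - intros y Hy. rewrite Rmin_left, Rmax_right in Hy by lra.
        apply Hcf; lra. }
    apply (is_RInt_unique (V := R_CompleteNormedModule)) in Hint.
    rewrite Hint, Hu0, HuR. unfold minus, plus, opp; simpl; ring. }
  assert (Hle : RInt f 0 R0 <=
     RInt (fun r => (r * Derive u r ^ 2 + / r * u r ^ 2) - 10 / R0 ^ 2 * (r * u r ^ 2)) 0 R0).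
  { apply RInt_le; [lra | exact Hf | |].
    - apply ex_RInt_Rminus; [apply ex_RInt_normH2; lra|].
      apply ex_RInt_Rmult, (ex_RInt_wint (fun x => x ^ 2)).
      intros; apply continuous_sqr.
    - intros y Hy. apply poincare_weight_pointwise; lra. }
  rewrite Hzero, RInt_Rminus, RInt_Rmult in Hle.
  - unfold normH2, mass, wint. lra.
  - apply (ex_RInt_wint (fun x => x ^ 2)). intros; apply continuous_sqr.
  - apply ex_RInt_normH2; lra.
  - apply ex_RInt_Rmult, (ex_RInt_wint (fun x => x ^ 2)).
    intros; apply continuous_sqr.
Qed.

Lemma wint_minus phi psi : (forall x, continuous phi x) -> (forall x, continuous psi x) ->
  wint R0 (fun x => phi x - psi x) u = wint R0 phi u - wint R0 psi u.
Proof.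
  intros Hphi Hpsi. unfold wint.
  rewrite <- RInt_Rminus by (apply ex_RInt_wint; auto).
  apply RInt_Rext. intros; ring.
Qed.

Lemma wint_scal c phi : (forall x, continuous phi x) ->
  wint R0 (fun x => c * phi x) u = c * wint R0 phi u.
Proof.
  intros Hphi. unfold wint.
  rewrite <- RInt_Rmult by (apply ex_RInt_wint; auto).
  apply RInt_Rext. intros; ring.
Qed.

Lemma wint_le_sup phi psi : (forall x, continuous phi x) -> (forall x, continuous psi x) ->
  (forall x, x ^ 2 <= normH2 R0 u -> phi x <= psi x) -> wint R0 phi u <= wint R0 psi u.
Proof.
  intros Hphi Hpsi Hle.
  apply RInt_le; [lra | apply ex_RInt_wint; auto | apply ex_RInt_wint; auto |].
  intros r Hr. apply Rmult_le_compat_l; [lra|]. apply Hle, sqr_le_normH2. lra.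
Qed.

Lemma wint_abs_le phi M : (forall x, continuous phi x) -> (forall x, Rabs (phi x) <= M) ->
  Rabs (wint R0 phi u) <= R0 * (R0 * M).
Proof.
  intros Hphi HM. replace (R0 * (R0 * M)) with ((R0 - 0) * (R0 * M)) by ring.
  apply abs_RInt_le_const; [lra | apply ex_RInt_wint; auto |].
  intros r Hr. rewrite Rabs_mult, (Rabs_right r) by lra.
  apply Rmult_le_compat; try lra; [apply Rabs_pos | apply HM].
Qed.

Lemma gamma_scale n a k c : 0 < a ->
  gamma n a k R0 (fun x => c * u x)
  = / 2 * (c ^ 2 * quad_part n a k R0 u + 2 * / a * wint R0 (sat a (c ^ 2)) u).
Proof.
  intros Ha. unfold gamma. f_equal.
  rewrite (RInt_Rext _ (fun r =>
      ((c ^ 2 * (r * Derive u r ^ 2) + IZR n ^ 2 * (c ^ 2 * (/ r * u r ^ 2)))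
       - 2 * (/ a - k) * (c ^ 2 * (r * u r ^ 2))) + 2 * / a * (r * sat a (c ^ 2) (u r)))).
  2: { intros x _. rewrite Derive_scal. unfold sat. rewrite !Rpow_mult_distr. unfold Rdiv. ring. }
  assert (HN := ex_RInt_wint (sat a (c ^ 2))
                  (fun x => continuous_sat a _ x (Rlt_le _ _ Ha) (pow2_ge_0 c))).
  assert (HB := ex_RInt_wint (fun x => x ^ 2) continuous_sqr).
  pose proof ex_RInt_dirichlet. pose proof ex_RInt_hardy.
  rewrite RInt_Rplus, RInt_Rminus, RInt_Rplus, !RInt_Rmult; try ex_RInt_lin.
  unfold quad_part, dirichlet, hardy, mass, wint.
  match goal with |- ?x = ?y => change (x = y :> R) end. ring.
Qed.

End WeightedIntegrals.

Section SaturationBounds.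

Variables (a : R) (x : R).
Hypothesis (Ha : 0 <= a).

Let Hden : 0 < 1 + a * x ^ 2.
Proof. pose proof (sat_den_pos a 1 x Ha Rle_0_1). rewrite Rmult_1_l in *. lra. Qed.

Lemma sat_deriv_ge0 : 0 <= sat_deriv a x.
Proof.
  unfold sat_deriv. apply Rmult_le_pos; [apply pow2_ge_0|].
  apply Rlt_le, Rinv_0_lt_compat, pow_lt, Hden.
Qed.

Lemma sat_eq_mul_sat_deriv : sat a 1 x = (1 + a * x ^ 2) * sat_deriv a x.
Proof. unfold sat, sat_deriv. rewrite !Rmult_1_l. field. lra. Qed.

Lemma sqr_sub_sat : x ^ 2 - sat a 1 x = a * x ^ 2 * sat a 1 x.
Proof. unfold sat. rewrite !Rmult_1_l. field. lra. Qed.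

Lemma sat_le_sqr : sat a 1 x <= x ^ 2.
Proof.
  pose proof sqr_sub_sat. pose proof sat_deriv_ge0. pose proof sat_eq_mul_sat_deriv.
  assert (0 <= a * x ^ 2) by (apply Rmult_le_pos; [lra | apply pow2_ge_0]).
  assert (0 <= sat a 1 x) by nra.
  nra.
Qed.

End SaturationBounds.

Section SaturationIntegrals.

Variables (R0 a : R) (u : R -> R).
Hypotheses (HR : 0 < R0) (Ha : 0 < a) (Hu : preH R0 u).

Let Hsat1 : forall x, continuous (sat a 1) x.
Proof. intros; apply continuous_sat; lra. Qed.

Let Hsatd : forall x, continuous (sat_deriv a) x.
Proof. intros; apply continuous_sat_deriv; lra. Qed.

Lemma mass_sub_sat_le_sqr : mass R0 u - wint R0 (sat a 1) u <= a * R0 ^ 2 * normH2 R0 u ^ 2.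
Proof.
  set (Q := normH2 R0 u).
  assert (HQ : 0 <= Q) by apply (normH2_ge0 R0 u HR Hu).
  unfold mass. rewrite <- (wint_minus R0 u HR Hu) by auto using continuous_sqr.
  apply Rle_trans with (wint R0 (fun x => a * Q * x ^ 2) u).
  - apply (wint_le_sup R0 u HR Hu).
    + intros x. apply (continuous_minus (fun y => y ^ 2) (sat a 1)); auto using continuous_sqr.
    + intros x. apply (continuous_mult (fun _ => a * Q) (fun y => y ^ 2));
        auto using continuous_const, continuous_sqr.
    + intros x Hx. rewrite sqr_sub_sat by lra.
      replace (a * Q * x ^ 2) with (a * x ^ 2 * Q) by ring.
      apply Rmult_le_compat_l; [apply Rmult_le_pos; [lra | apply pow2_ge_0]|].
      pose proof (sat_le_sqr a x (Rlt_le _ _ Ha)). unfold Q. lra.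
  - rewrite (wint_scal R0 u HR Hu) by apply continuous_sqr. fold (mass R0 u).
    assert (hardy R0 u <= Q).
    { unfold Q. rewrite (normH2_split R0 u HR Hu). pose proof (dirichlet_ge0 R0 u HR Hu). lra. }
    assert (mass R0 u <= R0 ^ 2 * Q).
    { apply Rle_trans with (R0 ^ 2 * hardy R0 u); [apply mass_le_hardy; auto|].
      apply Rmult_le_compat_l; [apply pow2_ge_0 | assumption]. }
    replace (a * R0 ^ 2 * Q ^ 2) with (a * Q * (R0 ^ 2 * Q)) by ring.
    apply Rmult_le_compat_l; [nra | assumption].
Qed.

Lemma mass_sub_sat_le_deriv : mass R0 u - wint R0 (sat a 1) u
  <= (1 + a * normH2 R0 u) * (wint R0 (sat a 1) u - wint R0 (sat_deriv a) u).
Proof.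
  set (Q := normH2 R0 u).
  assert (Hdiff : forall x, continuous (fun y => sat a 1 y - sat_deriv a y) x).
  { intros x. apply (continuous_minus (sat a 1) (sat_deriv a)); auto. }
  unfold mass. rewrite <- !(wint_minus R0 u HR Hu) by auto using continuous_sqr.
  rewrite <- (wint_scal R0 u HR Hu) by exact Hdiff.
  apply (wint_le_sup R0 u HR Hu).
  - intros x. apply (continuous_minus (fun y => y ^ 2) (sat a 1)); auto using continuous_sqr.
  - intros x. apply (continuous_mult (fun _ => 1 + a * Q) (fun y => sat a 1 y - sat_deriv a y)).
    + apply continuous_const.
    + apply Hdiff.
  - intros x Hx.
    assert (Hax : 0 <= a * x ^ 2) by (apply Rmult_le_pos; [lra | apply pow2_ge_0]).
    rewrite sqr_sub_sat, !sat_eq_mul_sat_deriv by lra.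
    pose proof (sat_deriv_ge0 a x (Rlt_le _ _ Ha)).
    replace (a * x ^ 2 * ((1 + a * x ^ 2) * sat_deriv a x))
      with ((1 + a * x ^ 2) * ((1 + a * x ^ 2) * sat_deriv a x - sat_deriv a x)) by ring.
    apply Rmult_le_compat_r; [nra|]. unfold Q. nra.
Qed.

End SaturationIntegrals.

(** * Convergence along Cauchy sequences *)

Definition hdens (u : R -> R) (r : R) : R := r * Derive u r ^ 2 + / r * u r ^ 2.

(* For every [d > 0] this dominates differences of quadratic densities (see [sqr_diff_le]); once
   integrated, choosing [d] small and then using the Cauchy property controls them. *)
Definition split_bound (u v : R -> R) (d r : R) : R :=
  / d * hdens (fun x => u x - v x) r + d * (hdens u r + hdens v r).

Lemma preH_minus R0 u v : preH R0 u -> preH R0 v -> preH R0 (fun x => u x - v x).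
Proof.
  intros Hu Hv. pose proof Hu as [[Hu1 Hu2] [Hu3 Hu4]]. pose proof Hv as [[Hv1 Hv2] [Hv3 Hv4]].
  split; [split|split].
  - intros x. apply (ex_derive_minus u v); auto.
  - intros x. apply (continuous_ext (fun y => Derive u y - Derive v y)).
    { intros y. symmetry. apply Derive_minus; auto. }
    apply (continuous_minus (Derive u) (Derive v)); auto.
  - rewrite Hu3, Hv3; ring.
  - rewrite Hu4, Hv4; ring.
Qed.

Lemma sqr_diff_le w a b d : 0 <= w -> 0 < d ->
  w * Rabs (a ^ 2 - b ^ 2) <= / d * (w * (a - b) ^ 2) + d * (w * a ^ 2 + w * b ^ 2).
Proof.
  intros Hw Hd.
  assert (Hi : 0 < / d) by (apply Rinv_0_lt_compat; lra).
  assert (H1 : 0 <= / d * ((a - b) - d * (a + b)) ^ 2)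
    by (apply Rmult_le_pos; [lra | apply pow2_ge_0]).
  assert (H2 : 0 <= / d * ((a - b) + d * (a + b)) ^ 2)
    by (apply Rmult_le_pos; [lra | apply pow2_ge_0]).
  assert (H3 : 0 <= d * (a - b) ^ 2) by (apply Rmult_le_pos; [lra | apply pow2_ge_0]).
  assert (Habs : Rabs (a ^ 2 - b ^ 2) <= / d * (a - b) ^ 2 + d * (a ^ 2 + b ^ 2)).
  { apply Rabs_le. split.
    - replace (/ d * ((a - b) + d * (a + b)) ^ 2)
        with (/ d * (a - b) ^ 2 + 2 * (a ^ 2 - b ^ 2) + d * (a + b) ^ 2) in H2 by (field; lra).
      nra.
    - replace (/ d * ((a - b) - d * (a + b)) ^ 2)
        with (/ d * (a - b) ^ 2 - 2 * (a ^ 2 - b ^ 2) + d * (a + b) ^ 2) in H1 by (field; lra).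
      nra. }
  replace (/ d * (w * (a - b) ^ 2) + d * (w * a ^ 2 + w * b ^ 2))
    with (w * (/ d * (a - b) ^ 2 + d * (a ^ 2 + b ^ 2))) by ring.
  apply Rmult_le_compat_l; assumption.
Qed.

Section SplitBounds.

Variables (u v : R -> R) (d r : R).
Hypotheses (Hd : 0 < d) (Hr : 0 < r) (Hu : ex_derive u r) (Hv : ex_derive v r).

Let hdens_minus : hdens (fun x => u x - v x) r
  = r * (Derive u r - Derive v r) ^ 2 + / r * (u r - v r) ^ 2.
Proof. unfold hdens. rewrite Derive_minus; auto. Qed.

Let Hi : 0 < / r.
Proof. apply Rinv_0_lt_compat, Hr. Qed.

Lemma dirichlet_dens_diff_le :
  Rabs (r * Derive u r ^ 2 - r * Derive v r ^ 2) <= split_bound u v d r.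
Proof.
  unfold split_bound. rewrite hdens_minus. unfold hdens.
  rewrite <- Rmult_minus_distr_l, Rabs_mult, (Rabs_right r) by lra.
  pose proof (sqr_diff_le r (Derive u r) (Derive v r) d (Rlt_le _ _ Hr) Hd).
  pose proof (sqr_diff_le (/ r) (u r) (v r) d (Rlt_le _ _ Hi) Hd).
  pose proof (Rabs_pos (u r ^ 2 - v r ^ 2)).
  assert (0 <= / r * Rabs (u r ^ 2 - v r ^ 2)) by (apply Rmult_le_pos; lra).
  lra.
Qed.

Lemma hardy_dens_diff_le :
  Rabs (/ r * u r ^ 2 - / r * v r ^ 2) <= split_bound u v d r.
Proof.
  unfold split_bound. rewrite hdens_minus. unfold hdens.
  rewrite <- Rmult_minus_distr_l, Rabs_mult, (Rabs_right (/ r)) by lra.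
  pose proof (sqr_diff_le r (Derive u r) (Derive v r) d (Rlt_le _ _ Hr) Hd).
  pose proof (sqr_diff_le (/ r) (u r) (v r) d (Rlt_le _ _ Hi) Hd).
  pose proof (Rabs_pos (Derive u r ^ 2 - Derive v r ^ 2)).
  assert (0 <= r * Rabs (Derive u r ^ 2 - Derive v r ^ 2)) by (apply Rmult_le_pos; lra).
  lra.
Qed.

Lemma hdens_diff_le : Rabs (hdens u r - hdens v r) <= split_bound u v d r.
Proof.
  unfold split_bound. rewrite hdens_minus. unfold hdens.
  pose proof (sqr_diff_le r (Derive u r) (Derive v r) d (Rlt_le _ _ Hr) Hd).
  pose proof (sqr_diff_le (/ r) (u r) (v r) d (Rlt_le _ _ Hi) Hd).
  replace (r * Derive u r ^ 2 + / r * u r ^ 2 - (r * Derive v r ^ 2 + / r * v r ^ 2))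
    with (r * (Derive u r ^ 2 - Derive v r ^ 2) + / r * (u r ^ 2 - v r ^ 2)) by ring.
  eapply Rle_trans; [apply Rabs_triang|].
  rewrite !Rabs_mult, (Rabs_right r), (Rabs_right (/ r)) by lra.
  lra.
Qed.

Lemma sqr_dens_diff_le R0 : r < R0 -> r * Rabs (u r ^ 2 - v r ^ 2) <= R0 ^ 2 * split_bound u v d r.
Proof.
  intros HrR.
  apply Rle_trans with (R0 ^ 2 * (/ r * Rabs (u r ^ 2 - v r ^ 2))).
  - replace (R0 ^ 2 * (/ r * Rabs (u r ^ 2 - v r ^ 2)))
      with (R0 ^ 2 / r ^ 2 * (r * Rabs (u r ^ 2 - v r ^ 2))) by (field; lra).
    rewrite <- (Rmult_1_l (r * Rabs _)) at 1.
    apply Rmult_le_compat_r; [apply Rmult_le_pos; [lra | apply Rabs_pos]|].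
    apply Rmult_le_reg_r with (r ^ 2); [apply pow_lt; lra|].
    unfold Rdiv. rewrite Rmult_assoc, Rinv_l by (apply pow_nonzero; lra). nra.
  - apply Rmult_le_compat_l; [apply pow2_ge_0|].
    pose proof hardy_dens_diff_le as H.
    rewrite <- Rmult_minus_distr_l, Rabs_mult, (Rabs_right (/ r)) in H by lra. exact H.
Qed.

End SplitBounds.

Lemma RInt_diff_le_split R0 u v (F G : R -> R) K d :
  0 < R0 -> 0 < d -> preH R0 u -> preH R0 v -> ex_RInt F 0 R0 -> ex_RInt G 0 R0 ->
  (forall r, 0 < r < R0 -> Rabs (F r - G r) <= K * split_bound u v d r) ->
  Rabs (RInt F 0 R0 - RInt G 0 R0)
  <= K * (/ d * normH2 R0 (fun x => u x - v x) + d * (normH2 R0 u + normH2 R0 v)).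
Proof.
  intros HR Hd Hu Hv HF HG Hpt.
  assert (Huv := preH_minus R0 u v Hu Hv).
  assert (Hu' : ex_RInt (hdens u) 0 R0) by (apply (ex_RInt_normH2 R0); auto; lra).
  assert (Hv' : ex_RInt (hdens v) 0 R0) by (apply (ex_RInt_normH2 R0); auto; lra).
  assert (Huv' : ex_RInt (hdens (fun x => u x - v x)) 0 R0)
    by (apply (ex_RInt_normH2 R0); auto; lra).
  set (B := fun r => K * split_bound u v d r).
  assert (HB : ex_RInt B 0 R0).
  { unfold B, split_bound. ex_RInt_lin. }
  assert (HIB : RInt B 0 R0
    = K * (/ d * normH2 R0 (fun x => u x - v x) + d * (normH2 R0 u + normH2 R0 v))).
  { unfold B, split_bound.
    rewrite RInt_Rmult, RInt_Rplus, !RInt_Rmult, RInt_Rplus; try ex_RInt_lin. }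
  rewrite <- HIB, <- RInt_Rminus by assumption.
  apply Rabs_le. split.
  - assert (Hlo : RInt (fun r => -1 * B r) 0 R0 <= RInt (fun x => F x - G x) 0 R0).
    { apply RInt_le; [lra | apply ex_RInt_Rmult, HB | apply ex_RInt_Rminus; auto |].
      intros r Hr. pose proof (Hpt r Hr). pose proof (Rle_abs (- (F r - G r))).
      rewrite Rabs_Ropp in *. unfold B. lra. }
    rewrite RInt_Rmult in Hlo by exact HB. lra.
  - apply RInt_le; [lra | apply ex_RInt_Rminus; auto | exact HB |].
    intros r Hr. pose proof (Hpt r Hr). pose proof (Rle_abs (F r - G r)). unfold B. lra.
Qed.

Lemma Hseq_bounded R0 s : 0 < R0 -> Hseq R0 s ->
  exists M N0, forall k, (N0 <= k)%nat -> normH2 R0 (s k) <= M.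
Proof.
  intros HR [Hp Hc]. destruct (Hc 1 Rlt_0_1) as [N0 HN0].
  exists (4 + 3 * normH2 R0 (s N0)), N0. intros k Hk.
  specialize (HN0 k N0 Hk (le_n _)).
  assert (Hb : Rabs (normH2 R0 (s k) - normH2 R0 (s N0))
    <= 1 * (/ / 2 * normH2 R0 (fun x => s k x - s N0 x)
            + / 2 * (normH2 R0 (s k) + normH2 R0 (s N0)))).
  { apply (RInt_diff_le_split R0 (s k) (s N0)); auto; try lra.
    - apply (ex_RInt_normH2 R0); auto. lra.
    - apply (ex_RInt_normH2 R0); auto. lra.
    - intros r Hr. rewrite Rmult_1_l.
      apply hdens_diff_le; try lra; apply (preH_ex_derive R0); auto. }
  assert (0 <= normH2 R0 (fun x => s k x - s N0 x))
    by (apply normH2_ge0; [exact HR | apply preH_minus; auto]).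
  apply Rabs_le_between in Hb. rewrite Rinv_inv in Hb. lra.
Qed.

Lemma ex_lim_RInt_of_split R0 s (F : nat -> R -> R) K :
  0 < R0 -> Hseq R0 s -> 0 <= K -> (forall k, ex_RInt (F k) 0 R0) ->
  (forall k l d r, 0 < d -> 0 < r < R0 ->
     Rabs (F k r - F l r) <= K * split_bound (s k) (s l) d r) ->
  ex_finite_lim_seq (fun k => RInt (F k) 0 R0).
Proof.
  intros HR Hs HK HF Hpt.
  destruct (Hseq_bounded R0 s HR Hs) as [M [N0 HM]].
  pose proof Hs as [Hp Hc].
  assert (HM0 : 0 <= M) by (apply Rle_trans with (normH2 R0 (s N0));
    [apply normH2_ge0; auto | apply HM; lia]).
  apply ex_lim_seq_cauchy_corr. intros [eps Heps]. simpl.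
  set (d := eps / (4 * (K * M + 1))).
  assert (Hd : 0 < d) by (apply Rdiv_lt_0_compat; nra).
  destruct (Hc (eps * d / (2 * (K + 1)))) as [N1 HN1]; [apply Rdiv_lt_0_compat; nra|].
  exists (max N0 N1). intros k l Hk Hl.
  specialize (HN1 k l ltac:(lia) ltac:(lia)).
  pose proof (HM k ltac:(lia)). pose proof (HM l ltac:(lia)).
  pose proof (normH2_ge0 R0 _ HR (preH_minus R0 _ _ (Hp k) (Hp l))).
  eapply Rle_lt_trans.
  { apply (RInt_diff_le_split R0 (s k) (s l) (F k) (F l) K d HR Hd (Hp k) (Hp l) (HF k) (HF l)).
    intros; apply Hpt; auto. }
  assert (h1 : K * (/ d * normH2 R0 (fun x => s k x - s l x)) <= eps / 2).
  { apply Rle_trans with (K * (/ d * (eps * d / (2 * (K + 1))))).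
    - apply Rmult_le_compat_l; [lra|].
      apply Rmult_le_compat_l; [apply Rlt_le, Rinv_0_lt_compat; lra | lra].
    - replace (K * (/ d * (eps * d / (2 * (K + 1))))) with (eps / 2 * (K / (K + 1)))
        by (field; lra).
      assert (K / (K + 1) <= 1) by (apply Rmult_le_reg_r with (K + 1); [lra|];
        unfold Rdiv; rewrite Rmult_assoc, Rinv_l by lra; lra).
      nra. }
  assert (h2 : K * (d * (normH2 R0 (s k) + normH2 R0 (s l))) < eps / 2).
  { apply Rle_lt_trans with (K * (d * (2 * M))).
    - apply Rmult_le_compat_l; [lra|]. apply Rmult_le_compat_l; lra.
    - unfold d.
      replace (K * (eps / (4 * (K * M + 1)) * (2 * M))) with (eps / 2 * (K * M / (K * M + 1)))
        by (field; nra).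
      assert (K * M / (K * M + 1) < 1) by (apply Rmult_lt_reg_r with (K * M + 1); [nra|];
        unfold Rdiv; rewrite Rmult_assoc, Rinv_l by nra; nra).
      nra. }
  lra.
Qed.

Lemma sat_lipschitz a sigma x y : 0 <= a -> 0 <= sigma ->
  Rabs (sat a sigma x - sat a sigma y) <= sigma * Rabs (x ^ 2 - y ^ 2).
Proof.
  intros Ha Hs. unfold sat.
  pose proof (pow2_ge_0 x). pose proof (pow2_ge_0 y).
  assert (H1 : 1 <= 1 + a * (sigma * x ^ 2)) by (assert (0 <= sigma * x ^ 2) by nra; nra).
  assert (H2 : 1 <= 1 + a * (sigma * y ^ 2)) by (assert (0 <= sigma * y ^ 2) by nra; nra).
  replace (sigma * x ^ 2 / (1 + a * (sigma * x ^ 2)) - sigma * y ^ 2 / (1 + a * (sigma * y ^ 2)))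
    with (sigma * (x ^ 2 - y ^ 2) * / ((1 + a * (sigma * x ^ 2)) * (1 + a * (sigma * y ^ 2))))
    by (field; lra).
  assert (Hprod : 1 <= (1 + a * (sigma * x ^ 2)) * (1 + a * (sigma * y ^ 2))) by nra.
  rewrite !Rabs_mult, (Rabs_right sigma), (Rabs_right (/ _))
    by (try apply Rle_ge, Rlt_le, Rinv_0_lt_compat; lra).
  rewrite <- (Rmult_1_r (sigma * Rabs (x ^ 2 - y ^ 2))) at 2.
  apply Rmult_le_compat_l; [apply Rmult_le_pos; [lra | apply Rabs_pos]|].
  rewrite <- Rinv_1. apply Rinv_le_contravar; lra.
Qed.

Lemma sat_deriv_lipschitz a x y : 0 <= a ->
  Rabs (sat_deriv a x - sat_deriv a y) <= Rabs (x ^ 2 - y ^ 2).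
Proof.
  intros Ha. unfold sat_deriv.
  set (A := x ^ 2). set (B := y ^ 2).
  assert (HA : 0 <= A) by apply pow2_ge_0. assert (HB : 0 <= B) by apply pow2_ge_0.
  set (D1 := 1 + a * A). set (D2 := 1 + a * B).
  assert (H1 : 1 <= D1) by (unfold D1; nra). assert (H2 : 1 <= D2) by (unfold D2; nra).
  replace (A / D1 ^ 2 - B / D2 ^ 2) with ((A - B) * ((1 - a ^ 2 * A * B) / (D1 ^ 2 * D2 ^ 2)))
    by (unfold D1, D2 in *; field; split; lra).
  rewrite Rabs_mult. rewrite <- (Rmult_1_r (Rabs (A - B))) at 2.
  apply Rmult_le_compat_l; [apply Rabs_pos|].
  assert (Hpos : 0 < D1 ^ 2 * D2 ^ 2) by (apply Rmult_lt_0_compat; apply pow_lt; lra).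
  unfold Rdiv.
  rewrite Rabs_mult, (Rabs_right (/ _)) by (apply Rle_ge, Rlt_le, Rinv_0_lt_compat; lra).
  apply Rmult_le_reg_r with (D1 ^ 2 * D2 ^ 2); [exact Hpos|].
  rewrite Rmult_assoc, Rinv_l, Rmult_1_r, Rmult_1_l by lra.
  assert (Hn : Rabs (1 - a ^ 2 * A * B) <= D1 * D2).
  { assert (0 <= a * A) by nra. assert (0 <= a * B) by nra.
    apply Rabs_le. unfold D1, D2. split; nra. }
  assert (D1 * D2 <= D1 ^ 2 * D2 ^ 2) by (assert (1 <= D1 * D2) by nra; nra).
  lra.
Qed.

Section CauchyLimits.

Variables (R0 : R) (s : nat -> R -> R).
Hypotheses (HR : 0 < R0) (Hs : Hseq R0 s).

Let Hp : forall k, preH R0 (s k).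
Proof. apply Hs. Qed.

Lemma ex_lim_normH2 : ex_finite_lim_seq (fun k => normH2 R0 (s k)).
Proof.
  apply (ex_lim_RInt_of_split R0 s (fun k => hdens (s k)) 1); auto; [lra| |].
  - intros k. apply (ex_RInt_normH2 R0); auto. lra.
  - intros k l d r Hd Hr. rewrite Rmult_1_l.
    apply hdens_diff_le; try lra; apply (preH_ex_derive R0); auto.
Qed.

Lemma ex_lim_dirichlet : ex_finite_lim_seq (fun k => dirichlet R0 (s k)).
Proof.
  apply (ex_lim_RInt_of_split R0 s (fun k r => r * Derive (s k) r ^ 2) 1); auto; [lra| |].
  - intros k. apply ex_RInt_dirichlet; auto.
  - intros k l d r Hd Hr. rewrite Rmult_1_l.
    apply dirichlet_dens_diff_le; try lra; apply (preH_ex_derive R0); auto.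
Qed.

Lemma ex_lim_hardy : ex_finite_lim_seq (fun k => hardy R0 (s k)).
Proof.
  apply (ex_lim_RInt_of_split R0 s (fun k r => / r * s k r ^ 2) 1); auto; [lra| |].
  - intros k. apply ex_RInt_hardy; auto.
  - intros k l d r Hd Hr. rewrite Rmult_1_l.
    apply hardy_dens_diff_le; try lra; apply (preH_ex_derive R0); auto.
Qed.

Lemma ex_lim_wint phi K : (forall x, continuous phi x) -> 0 <= K ->
  (forall x y, Rabs (phi x - phi y) <= K * Rabs (x ^ 2 - y ^ 2)) ->
  ex_finite_lim_seq (fun k => wint R0 phi (s k)).
Proof.
  intros Hphi HK Hlip.
  apply (ex_lim_RInt_of_split R0 s (fun k r => r * phi (s k r)) (K * R0 ^ 2)); auto.
  - apply Rmult_le_pos; [lra | apply pow2_ge_0].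
  - intros k. apply ex_RInt_wint; auto.
  - intros k l d r Hd Hr.
    rewrite <- Rmult_minus_distr_l, Rabs_mult, (Rabs_right r) by lra.
    apply Rle_trans with (K * (r * Rabs (s k r ^ 2 - s l r ^ 2))).
    + replace (K * (r * Rabs (s k r ^ 2 - s l r ^ 2))) with (r * (K * Rabs (s k r ^ 2 - s l r ^ 2)))
        by ring.
      apply Rmult_le_compat_l; [lra | apply Hlip].
    + rewrite Rmult_assoc. apply Rmult_le_compat_l; [exact HK|].
      apply sqr_dens_diff_le; try lra; apply (preH_ex_derive R0); auto.
Qed.

End CauchyLimits.

(** * The functional along a Cauchy sequence *)

Lemma sat_remainder a sigma x : 0 < a -> 0 <= sigma ->
  Rabs (sat a sigma x - sat a 1 x - (sigma - 1) * sat_deriv a x) <= (sigma - 1) ^ 2 / a.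
Proof.
  intros Ha Hs. unfold sat, sat_deriv.
  set (X := x ^ 2). assert (HX : 0 <= X) by apply pow2_ge_0.
  assert (H1 : 1 <= 1 + a * X) by nra.
  assert (H2 : 1 <= 1 + a * (sigma * X)) by (assert (0 <= sigma * X) by nra; nra).
  set (D := (1 + a * X) ^ 2 * (1 + a * (sigma * X))).
  assert (HD : 0 < D) by (apply Rmult_lt_0_compat; [apply pow_lt|]; lra).
  replace (sigma * X / (1 + a * (sigma * X)) - 1 * X / (1 + a * (1 * X))
           - (sigma - 1) * (X / (1 + a * X) ^ 2))
    with (- ((sigma - 1) ^ 2 * (a * X ^ 2 / D))) by (unfold D; field; split; lra).
  rewrite Rabs_Ropp, Rabs_mult, (Rabs_right ((sigma - 1) ^ 2)) by (apply Rle_ge, pow2_ge_0).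
  unfold Rdiv at 2. apply Rmult_le_compat_l; [apply pow2_ge_0|].
  assert (HaX : 0 <= a * X) by nra.
  rewrite Rabs_right by (apply Rle_ge, Rmult_le_pos; [nra | apply Rlt_le, Rinv_0_lt_compat; lra]).
  apply Rmult_le_reg_l with (a * D); [nra|].
  replace (a * D * (a * X ^ 2 / D)) with ((a * X) ^ 2) by (field; lra).
  replace (a * D * / a) with D by (field; lra).
  unfold D. assert ((a * X) ^ 2 <= (1 + a * X) ^ 2) by nra.
  assert (0 <= (1 + a * X) ^ 2) by apply pow2_ge_0. nra.
Qed.

Lemma is_derive_of_sqr_remainder (phi : R -> R) x d K : 0 <= K ->
  (forall h, Rabs h <= 1 -> Rabs (phi (x + h) - phi x - h * d) <= K * h ^ 2) ->
  is_derive phi x d.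
Proof.
  intros HK Hrem. apply is_derive_Reals. intros eps Heps.
  assert (Hdelta : 0 < Rmin 1 (eps / (K + 1)))
    by (apply Rmin_pos; [lra | apply Rdiv_lt_0_compat; lra]).
  exists (mkposreal _ Hdelta). intros h Hh0 Hh. simpl in Hh.
  assert (Hh1 : Rabs h <= 1) by (pose proof (Rmin_l 1 (eps / (K + 1))); lra).
  assert (Hh2 : Rabs h < eps / (K + 1)) by (pose proof (Rmin_r 1 (eps / (K + 1))); lra).
  assert (Hah : 0 < Rabs h) by (apply Rabs_pos_lt; auto).
  replace ((phi (x + h) - phi x) / h - d) with ((phi (x + h) - phi x - h * d) / h) by (field; auto).
  unfold Rdiv. rewrite Rabs_mult, Rabs_inv.
  apply Rle_lt_trans with (K * h ^ 2 * / Rabs h).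
  { apply Rmult_le_compat_r; [apply Rlt_le, Rinv_0_lt_compat; lra | apply Hrem, Hh1]. }
  replace (K * h ^ 2 * / Rabs h) with (K * Rabs h) by (rewrite <- (pow2_abs h); field; lra).
  apply Rle_lt_trans with ((K + 1) * Rabs h); [nra|].
  replace eps with ((K + 1) * (eps / (K + 1))) by (field; lra).
  apply Rmult_lt_compat_l; lra.
Qed.

Definition limH (F : (R -> R) -> R) (s : nat -> R -> R) : R := real (Lim_seq (fun k => F (s k))).

Lemma is_lim_seq_limH F s : ex_finite_lim_seq (fun k => F (s k)) ->
  is_lim_seq (fun k => F (s k)) (limH F s).
Proof. intros [l Hl]. unfold limH. rewrite (is_lim_seq_unique _ _ Hl). exact Hl. Qed.

Ltac lim_combo :=
  lazymatch goal with
  | |- is_lim_seq (fun k => @?f k + @?g k) (Finite (?a + ?b)) =>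
      apply (is_lim_seq_plus' f g a b); lim_combo
  | |- is_lim_seq (fun k => @?f k - @?g k) (Finite (?a - ?b)) =>
      apply (is_lim_seq_minus' f g a b); lim_combo
  | |- is_lim_seq (fun k => @?f k * @?g k) (Finite (?a * ?b)) =>
      apply (is_lim_seq_mult' f g a b); lim_combo
  | |- _ => first [assumption | apply is_lim_seq_const | apply is_lim_seq_limH; assumption | idtac]
  end.

Lemma is_lim_seq_abs_le (v : nat -> R) (l M : R) :
  is_lim_seq v l -> (forall k, Rabs (v k) <= M) -> Rabs l <= M.
Proof.
  intros Hl HM. apply Rabs_le. split.
  - apply (is_lim_seq_le (fun _ => - M) v (- M) l); auto using is_lim_seq_const.
    intros k. pose proof (HM k) as H. apply Rabs_le_between in H. lra.
  - apply (is_lim_seq_le v (fun _ => M) l M); auto using is_lim_seq_const.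
    intros k. pose proof (HM k) as H. apply Rabs_le_between in H. lra.
Qed.

Section GammaAlongCauchySequence.

Variables (n : Z) (alpha kappa R0 : R) (s : nat -> R -> R).
Hypotheses (Ha : 0 < alpha) (HR : 0 < R0) (Hs : Hseq R0 s).

Let Hp : forall k, preH R0 (s k).
Proof. apply Hs. Qed.

Lemma ex_lim_mass : ex_finite_lim_seq (fun k => mass R0 (s k)).
Proof.
  apply (ex_lim_wint R0 s HR Hs (fun x => x ^ 2) 1); [apply continuous_sqr | lra |].
  intros; lra.
Qed.

Lemma ex_lim_sat sigma : 0 <= sigma -> ex_finite_lim_seq (fun k => wint R0 (sat alpha sigma) (s k)).
Proof.
  intros Hsg. apply (ex_lim_wint R0 s HR Hs _ sigma); auto.
  - intros; apply continuous_sat; lra.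
  - intros; apply sat_lipschitz; lra.
Qed.

Lemma ex_lim_sat_deriv : ex_finite_lim_seq (fun k => wint R0 (sat_deriv alpha) (s k)).
Proof.
  apply (ex_lim_wint R0 s HR Hs _ 1); [intros; apply continuous_sat_deriv; lra | lra |].
  intros; rewrite Rmult_1_l; apply sat_deriv_lipschitz; lra.
Qed.

Lemma ex_lim_quad_part : ex_finite_lim_seq (fun k => quad_part n alpha kappa R0 (s k)).
Proof.
  pose proof (is_lim_seq_limH _ _ (ex_lim_dirichlet R0 s HR Hs)).
  pose proof (is_lim_seq_limH _ _ (ex_lim_hardy R0 s HR Hs)).
  pose proof (is_lim_seq_limH _ _ ex_lim_mass).
  exists (limH (dirichlet R0) s + IZR n ^ 2 * limH (hardy R0) s
          - 2 * (/ alpha - kappa) * limH (mass R0) s).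
  unfold quad_part. lim_combo.
Qed.

Lemma gammaH_scale c : gammaH n alpha kappa R0 (fun k x => c * s k x)
  = / 2 * (c ^ 2 * limH (quad_part n alpha kappa R0) s
           + 2 * / alpha * limH (wint R0 (sat alpha (c ^ 2))) s).
Proof.
  unfold gammaH.
  rewrite (Lim_seq_ext _ (fun k => / 2 * (c ^ 2 * quad_part n alpha kappa R0 (s k)
                                   + 2 * / alpha * wint R0 (sat alpha (c ^ 2)) (s k))))
    by (intros; apply gamma_scale; auto).
  pose proof (is_lim_seq_limH _ _ ex_lim_quad_part).
  pose proof (is_lim_seq_limH _ _ (ex_lim_sat (c ^ 2) (pow2_ge_0 c))).
  rewrite (is_lim_seq_unique _ (/ 2 * (c ^ 2 * limH (quad_part n alpha kappa R0) s
           + 2 * / alpha * limH (wint R0 (sat alpha (c ^ 2))) s))); [reflexivity | lim_combo].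
Qed.

Lemma gammaH_eq : gammaH n alpha kappa R0 s
  = / 2 * (limH (quad_part n alpha kappa R0) s + 2 * / alpha * limH (wint R0 (sat alpha 1)) s).
Proof.
  replace s with (fun k x => 1 * s k x) at 1
    by (apply functional_extensionality; intros k; apply functional_extensionality; intros x; ring).
  rewrite gammaH_scale, pow1, Rmult_1_l. reflexivity.
Qed.

(* The saturable term is [C^1] in the scaling [sigma], with a remainder uniform along [s]. *)
Lemma is_derive_limH_sat : is_derive (fun sigma => limH (wint R0 (sat alpha sigma)) s) 1
  (limH (wint R0 (sat_deriv alpha)) s).
Proof.
  apply (is_derive_of_sqr_remainder _ 1 _ (R0 * (R0 / alpha))).
  { apply Rmult_le_pos; [lra | apply Rlt_le, Rdiv_lt_0_compat; lra]. }
  intros h Hh. apply Rabs_le_between in Hh.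
  assert (Hsg : 0 <= 1 + h) by lra.
  pose proof (is_lim_seq_limH _ _ (ex_lim_sat (1 + h) Hsg)).
  pose proof (is_lim_seq_limH _ _ (ex_lim_sat 1 Rle_0_1)).
  pose proof (is_lim_seq_limH _ _ ex_lim_sat_deriv).
  apply (is_lim_seq_abs_le (fun k => wint R0 (sat alpha (1 + h)) (s k) - wint R0 (sat alpha 1) (s k)
                                    - h * wint R0 (sat_deriv alpha) (s k))); [lim_combo|].
  intros k.
  assert (Hsat : forall sigma, 0 <= sigma -> forall x, continuous (sat alpha sigma) x)
    by (intros; apply continuous_sat; lra).
  assert (Hsd : forall x, continuous (sat_deriv alpha) x)
    by (intros; apply continuous_sat_deriv; lra).
  rewrite <- (wint_scal R0 (s k) HR (Hp k)), <- !(wint_minus R0 (s k) HR (Hp k));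
    auto using Rle_0_1.
  - replace (R0 * (R0 / alpha) * h ^ 2) with (R0 * (R0 * ((1 + h - 1) ^ 2 / alpha)))
      by (field; lra).
    apply (wint_abs_le R0 (s k) HR (Hp k)).
    + intros x. apply (continuous_minus (fun y => sat alpha (1 + h) y - sat alpha 1 y)
                                        (fun y => h * sat_deriv alpha y)).
      * apply (continuous_minus (sat alpha (1 + h)) (sat alpha 1)); auto using Rle_0_1.
      * apply (continuous_mult (fun _ => h) (sat_deriv alpha)); auto using continuous_const.
    + intros x. pose proof (sat_remainder alpha (1 + h) x Ha Hsg) as Hr.
      replace (1 + h - 1) with h in Hr |- * by ring. exact Hr.
  - intros x. apply (continuous_minus (sat alpha (1 + h)) (sat alpha 1)); auto using Rle_0_1.
  - intros x. apply (continuous_mult (fun _ => h) (sat_deriv alpha)); auto using continuous_const.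
Qed.

Lemma dgamma_u_u_eq : dgamma_u_u n alpha kappa R0 s
  = 2 * gammaH n alpha kappa R0 s
    - 2 * / alpha * (limH (wint R0 (sat alpha 1)) s - limH (wint R0 (sat_deriv alpha)) s).
Proof.
  set (P := limH (quad_part n alpha kappa R0) s).
  set (N := fun sigma => limH (wint R0 (sat alpha sigma)) s).
  set (Np := limH (wint R0 (sat_deriv alpha)) s).
  rewrite gammaH_eq. fold P.
  replace (2 * (/ 2 * (P + 2 * / alpha * limH (wint R0 (sat alpha 1)) s))
           - 2 * / alpha * (limH (wint R0 (sat alpha 1)) s - Np))
    with (P + 2 * / alpha * Np) by (field; lra).
  unfold dgamma_u_u.
  rewrite (Derive_ext _ (fun t => / 2 * ((1 + t) ^ 2 * P + 2 * / alpha * N ((1 + t) ^ 2))))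
    by (intros; apply gammaH_scale).
  apply is_derive_unique.
  assert (HN : is_derive (fun t => N ((1 + t) ^ 2)) 0 (2 * Np)).
  { apply (is_derive_comp N (fun t => (1 + t) ^ 2)).
    - replace ((1 + 0) ^ 2) with 1 by ring. apply is_derive_limH_sat.
    - auto_derive; try exact I; ring. }
  assert (HP : is_derive (fun t => (1 + t) ^ 2 * P) 0 (2 * P)) by (auto_derive; try exact I; ring).
  replace (P + 2 * / alpha * Np) with (/ 2 * (2 * P + 2 * / alpha * (2 * Np))) by (field; lra).
  apply is_derive_scal.
  apply (is_derive_plus (fun t => (1 + t) ^ 2 * P) (fun t => 2 * / alpha * N ((1 + t) ^ 2))).
  - exact HP.
  - apply is_derive_scal, HN.
Qed.

End GammaAlongCauchySequence.

(** * The first zero of [J0] lies below 3 *)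

Definition J0_coef (m : nat) : R := (-1) ^ m / (INR (fact m)) ^ 2.

Lemma J0_PSeries x : J0 x = PSeries J0_coef ((x / 2) ^ 2).
Proof.
  unfold J0, PSeries. apply Series_ext. intros m. unfold J0_coef. rewrite pow_mult. reflexivity.
Qed.

Lemma J0_coef_ratio n : Rabs (J0_coef (S n) / J0_coef n) = / INR (S n) * / INR (S n).
Proof.
  pose proof (INR_fact_lt_0 n). pose proof (pos_INR n).
  assert (HS : 0 < INR (S n)) by (rewrite S_INR; lra).
  assert (Hpn : (-1) ^ n <> 0) by (apply pow_nonzero; lra).
  assert (E : J0_coef (S n) / J0_coef n = - (/ INR (S n) * / INR (S n))).
  { unfold J0_coef. rewrite fact_simpl, mult_INR.
    replace ((-1) ^ S n) with (-1 * (-1) ^ n) by reflexivity.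
    field. repeat split; lra. }
  rewrite E, Rabs_Ropp, Rabs_right; auto.
  apply Rle_ge, Rmult_le_pos; left; apply Rinv_0_lt_compat; auto.
Qed.

Lemma CV_radius_J0_coef : CV_radius J0_coef = p_infty.
Proof.
  apply CV_radius_infinite_DAlembert.
  - intros n. unfold J0_coef. apply Rmult_integral_contrapositive_currified.
    apply pow_nonzero; lra. apply Rinv_neq_0_compat, pow_nonzero, INR_fact_neq_0.
  - apply (is_lim_seq_ext (fun n => / INR (S n) * / INR (S n))).
    { intros n; rewrite J0_coef_ratio; auto. }
    replace (Finite 0) with (Finite (0 * 0)) by (f_equal; ring).
    assert (H : is_lim_seq (fun n => / INR (S n)) 0).
    { apply (is_lim_seq_incr_1 (fun n => / INR n)).
      replace (Finite 0) with (Rbar_inv p_infty) by reflexivity.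
      apply is_lim_seq_inv. apply is_lim_seq_INR. discriminate. }
    apply is_lim_seq_mult'; auto.
Qed.

Lemma continuity_pt_J0 x : continuity_pt J0 x.
Proof.
  assert (E : J0 = comp (PSeries J0_coef) (fun x => (x / 2) ^ 2)).
  { apply functional_extensionality; intros y. unfold comp. apply J0_PSeries. }
  rewrite E. apply continuity_pt_comp.
  - apply continuity_pt_filterlim, (ex_derive_continuous (fun x => (x / 2) ^ 2)).
    auto_derive. auto.
  - apply PSeries_continuity. rewrite CV_radius_J0_coef. simpl; auto.
Qed.

Lemma J0_0 : J0 0 = 1.
Proof.
  rewrite J0_PSeries. replace ((0 / 2) ^ 2) with 0 by field.
  rewrite PSeries_0. unfold J0_coef. simpl. field.
Qed.

(* [J0 3 = 1 - sum_m (-1)^m J0_3_tail m]; four terms of this alternating sum already exceed 1. *)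
Definition J0_3_tail (m : nat) : R := (9 / 4) ^ S m / INR (fact (S m)) ^ 2.

Lemma J0_3_tail_ge0 m : 0 <= J0_3_tail m.
Proof.
  unfold J0_3_tail. apply Rmult_le_pos; [apply pow_le; lra|].
  apply Rlt_le, Rinv_0_lt_compat, pow_lt, INR_fact_lt_0.
Qed.

Lemma J0_3_tail_decreasing : Un_decreasing J0_3_tail.
Proof.
  intros m. pose proof (INR_fact_lt_0 (S m)) as HF.
  assert (HN : 2 <= INR (S (S m))) by (rewrite !S_INR; pose proof (pos_INR m); lra).
  assert (E : J0_3_tail (S m) = J0_3_tail m * (9 / 4 / INR (S (S m)) ^ 2)).
  { unfold J0_3_tail. rewrite (fact_simpl (S m)), mult_INR.
    replace ((9 / 4) ^ S (S m)) with (9 / 4 * (9 / 4) ^ S m) by reflexivity.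
    field. split; lra. }
  rewrite E. pose proof (J0_3_tail_ge0 m).
  assert (9 / 4 / INR (S (S m)) ^ 2 <= 1).
  { apply Rmult_le_reg_r with (INR (S (S m)) ^ 2). apply pow_lt; lra.
    unfold Rdiv. rewrite Rmult_assoc, Rinv_l by (apply pow_nonzero; lra). nra. }
  apply Rle_trans with (J0_3_tail m * 1). apply Rmult_le_compat_l; auto. lra.
Qed.

Lemma J0_3_tail_cv : Un_cv J0_3_tail 0.
Proof.
  apply is_lim_seq_Reals.
  apply (is_lim_seq_le_le (fun _ => 0) J0_3_tail (fun m => (9 / 4) ^ S m / INR (fact (S m)))).
  - intros m. split. apply J0_3_tail_ge0. unfold J0_3_tail.
    pose proof (INR_fact_lt_0 (S m)) as HF.
    assert (H1 : 1 <= INR (fact (S m))) by (apply (le_INR 1); apply lt_O_fact).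
    unfold Rdiv. apply Rmult_le_compat_l. apply pow_le; lra.
    apply Rinv_le_contravar. auto. revert H1. generalize (INR (fact (S m))). intros F HF1. nra.
  - apply is_lim_seq_const.
  - apply (is_lim_seq_incr_1 (fun m => (9 / 4) ^ m / INR (fact m))).
    apply is_lim_seq_Reals. apply cv_speed_pow_fact.
Qed.

Lemma J0_3_neg : J0 3 < 0.
Proof.
  destruct (alternated_series J0_3_tail J0_3_tail_decreasing J0_3_tail_cv) as [l Hl].
  pose proof (alternated_series_ineq J0_3_tail l 1 J0_3_tail_decreasing J0_3_tail_cv Hl) as [Hlo _].
  assert (Hs : is_series (tg_alt J0_3_tail) l) by (apply is_series_Reals; exact Hl).
  assert (Hf : forall m,
    (-1) ^ S m / INR (fact (S m)) ^ 2 * (3 / 2) ^ (2 * S m) = - tg_alt J0_3_tail m).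
  { intros m. unfold tg_alt, J0_3_tail. rewrite pow_mult.
    replace ((3 / 2) ^ 2) with (9 / 4) by field.
    replace ((-1) ^ S m) with (-1 * (-1) ^ m) by reflexivity.
    pose proof (INR_fact_lt_0 (S m)). field. lra. }
  unfold J0. rewrite Series_incr_1.
  - rewrite Series_ext with (b := fun m => - tg_alt J0_3_tail m) by apply Hf.
    rewrite Series_opp, (is_series_unique _ l Hs).
    simpl in Hlo. unfold tg_alt, J0_3_tail in Hlo. simpl in Hlo. simpl.
    lra.
  - apply ex_series_incr_1. apply ex_series_ext with (a := fun m => - tg_alt J0_3_tail m).
    + intros n. symmetry. apply Hf.
    + exists (- l). apply (is_series_opp (tg_alt J0_3_tail) l) in Hs. exact Hs.
Qed.

Lemma first_pos_zero_J0_lt_3 r0 : first_pos_zero_J0 r0 -> r0 < 3.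
Proof.
  intros [Hr0 [HJ Hnz]].
  destruct (Rlt_or_le r0 3) as [H|H]; auto. exfalso.
  assert (Hc : continuity (fun x => - J0 x)).
  { intros x. apply (continuity_pt_opp J0). apply continuity_pt_J0. }
  destruct (IVT (fun x => - J0 x) 0 3 Hc ltac:(lra)) as [z [Hz Hz0]].
  { rewrite J0_0. lra. }
  { pose proof J0_3_neg. lra. }
  assert (Jz : J0 z = 0) by lra.
  assert (z <> 0). { intros ->. rewrite J0_0 in Jz. lra. }
  assert (z <> 3). { intros ->. pose proof J0_3_neg. lra. }
  apply (Hnz z); auto. lra.
Qed.

(** * Coercivity and the Nehari estimate *)

Lemma IZR_sqr_ge_1 (n : Z) : (1 <= Z.abs n)%Z -> 1 <= IZR n ^ 2.
Proof.
  intros H. apply IZR_le in H. rewrite abs_IZR in H.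
  rewrite <- (pow2_abs (IZR n)). nra.
Qed.

Lemma coercive_constant nn R0 kappa : 1 <= nn -> 0 < R0 -> - ((9 + nn) / (2 * R0 ^ 2)) < kappa ->
  exists c, 0 < c /\ forall D I B, 0 <= B -> 10 / R0 ^ 2 * B <= D + I -> B <= R0 ^ 2 * I ->
    c * (D + I) <= D + nn * I + 2 * kappa * B.
Proof.
  intros Hnn HR Hk.
  set (m := (9 + nn) / R0 ^ 2).
  assert (HR2 : 0 < R0 ^ 2) by (apply pow_lt; lra).
  assert (Hm : 0 < m) by (apply Rdiv_lt_0_compat; lra).
  assert (Hkm : - m < 2 * kappa)
    by (unfold m; replace ((9 + nn) / (2 * R0 ^ 2)) with ((9 + nn) / R0 ^ 2 / 2) in Hk
          by (field; lra); lra).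
  set (c := Rmin 1 (1 + 2 * kappa / m)).
  assert (Hc0 : 0 < c).
  { apply Rmin_pos; [lra|].
    assert (- 1 < 2 * kappa / m) by (apply Rmult_lt_reg_r with m; [lra|]; unfold Rdiv;
      rewrite Rmult_assoc, Rinv_l by lra; lra).
    lra. }
  exists c. split; [exact Hc0|].
  assert (Hc1 : c <= 1) by apply Rmin_l.
  assert (Hck : - (2 * kappa) <= (1 - c) * m).
  { unfold c. destruct (Rle_dec 1 (1 + 2 * kappa / m)) as [H|H].
    - rewrite Rmin_left by auto.
      assert (0 <= 2 * kappa) by (replace (2 * kappa) with (2 * kappa / m * m) by (field; lra);
        apply Rmult_le_pos; lra).
      lra.
    - rewrite Rmin_right by lra. right. field. lra. }
  intros D I B HB Hpoin HBI.
  assert (HB' : 0 <= B / R0 ^ 2) by (apply Rdiv_le_0_compat; lra).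
  assert (HI : B / R0 ^ 2 <= I)
    by (apply Rmult_le_reg_l with (R0 ^ 2); [lra|];
        replace (R0 ^ 2 * (B / R0 ^ 2)) with B by (field; lra); lra).
  assert (s1 : (1 - c) * (10 * (B / R0 ^ 2)) <= (1 - c) * (D + I)).
  { apply Rmult_le_compat_l; [lra|].
    replace (10 * (B / R0 ^ 2)) with (10 / R0 ^ 2 * B) by (field; lra). lra. }
  assert (s2 : (nn - 1) * (B / R0 ^ 2) <= (nn - 1) * I) by (apply Rmult_le_compat_l; lra).
  assert (s3 : - (2 * kappa) * B <= (1 - c) * m * B) by (apply Rmult_le_compat_r; lra).
  replace ((1 - c) * m * B) with ((1 - c) * (9 + nn) * (B / R0 ^ 2)) in s3
    by (unfold m; field; lra).
  assert (0 <= c * (nn - 1) * (B / R0 ^ 2)) by (apply Rmult_le_pos; [apply Rmult_le_pos|]; lra).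
  nra.
Qed.

Lemma coercivity r0 n alpha kappa R0 : first_pos_zero_J0 r0 -> (1 <= Z.abs n)%Z -> 0 < R0 ->
  - ((r0 ^ 2 + IZR n ^ 2) / (2 * R0 ^ 2)) < kappa ->
  exists c, 0 < c /\ forall u, preH R0 u ->
    c * normH2 R0 u <= quad_part n alpha kappa R0 u + 2 * / alpha * mass R0 u.
Proof.
  intros Hr0 Hn HR Hk.
  pose proof (first_pos_zero_J0_lt_3 r0 Hr0). destruct Hr0 as [Hr0 _].
  assert (HR2 : 0 < R0 ^ 2) by (apply pow_lt; lra).
  destruct (coercive_constant (IZR n ^ 2) R0 kappa (IZR_sqr_ge_1 n Hn) HR) as [c [Hc Hcoer]].
  { apply Rlt_le_trans with (- ((r0 ^ 2 + IZR n ^ 2) / (2 * R0 ^ 2))); [|lra].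
    apply Ropp_lt_contravar, Rmult_lt_compat_r; [apply Rinv_0_lt_compat; lra | nra]. }
  exists c. split; [exact Hc|]. intros u Hu.
  rewrite (normH2_split R0 u HR Hu). unfold quad_part.
  replace (dirichlet R0 u + IZR n ^ 2 * hardy R0 u - 2 * (/ alpha - kappa) * mass R0 u
           + 2 * / alpha * mass R0 u)
    with (dirichlet R0 u + IZR n ^ 2 * hardy R0 u + 2 * kappa * mass R0 u) by ring.
  apply Hcoer.
  - apply (wint_ge0 R0 u HR Hu); [apply continuous_sqr | intros; apply pow2_ge_0].
  - rewrite <- (normH2_split R0 u HR Hu). apply poincare; auto.
  - apply mass_le_hardy; auto.
Qed.

Definition nehari_const (c a R0 : R) : R :=
  let Q0 := c / (2 * R0 ^ 2) in c * Q0 / (2 * (1 + a * Q0)).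

Lemma nehari_const_pos c a R0 : 0 < c -> 0 < a -> 0 < R0 -> 0 < nehari_const c a R0.
Proof.
  intros Hc Ha HR. unfold nehari_const.
  assert (0 < c / (2 * R0 ^ 2))
    by (apply Rdiv_lt_0_compat; [lra | pose proof (pow_lt R0 2 HR); lra]).
  apply Rdiv_lt_0_compat; [nra|]. assert (0 < a * (c / (2 * R0 ^ 2))) by nra. lra.
Qed.

(* With [X = (B - N1) / a] and [Y = (N1 - Np) / a]: [c Q <= 2 X <= 2 R0^2 Q^2] bounds [Q] below by
   [Q0 = c / (2 R0^2)], and [c Q <= 2 (1 + a Q) Y] with [q / (1 + a q)] increasing bounds [Y]. *)
Lemma nehari_gap c a R0 Q B N1 Np : 0 < c -> 0 < a -> 0 < R0 -> 0 < Q ->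
  c * Q <= 2 * / a * (B - N1) -> B - N1 <= a * R0 ^ 2 * Q ^ 2 ->
  B - N1 <= (1 + a * Q) * (N1 - Np) ->
  - (2 * / a * (N1 - Np)) < - nehari_const c a R0.
Proof.
  intros Hc Ha HR HQ H1 H2 H3.
  pose proof (nehari_const_pos c a R0 Hc Ha HR) as HC.
  assert (HR2 : 0 < R0 ^ 2) by (apply pow_lt; lra).
  assert (H2a : 0 <= 2 * / a)
    by (apply Rlt_le, Rmult_lt_0_compat; [lra | apply Rinv_0_lt_compat; lra]).
  set (Y := / a * (N1 - Np)).
  assert (HcY : c * Q <= 2 * (1 + a * Q) * Y).
  { unfold Y. apply Rle_trans with (2 * / a * (B - N1)); [exact H1|].
    replace (2 * (1 + a * Q) * (/ a * (N1 - Np))) with (2 * / a * ((1 + a * Q) * (N1 - Np)))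
      by ring.
    apply Rmult_le_compat_l; [exact H2a | exact H3]. }
  set (Q0 := c / (2 * R0 ^ 2)).
  assert (HQ0 : Q0 <= Q).
  { assert (c * Q <= 2 * R0 ^ 2 * Q * Q).
    { apply Rle_trans with (2 * / a * (B - N1)); [exact H1|].
      replace (2 * R0 ^ 2 * Q * Q) with (2 * / a * (a * R0 ^ 2 * Q ^ 2)) by (field; lra).
      apply Rmult_le_compat_l; [exact H2a | exact H2]. }
    unfold Q0. apply Rmult_le_reg_l with (2 * R0 ^ 2); [lra|].
    replace (2 * R0 ^ 2 * (c / (2 * R0 ^ 2))) with c by (field; lra). nra. }
  assert (HQ0p : 0 < Q0) by (unfold Q0; apply Rdiv_lt_0_compat; lra).
  assert (HCY : nehari_const c a R0 <= Y).
  { unfold nehari_const. fold Q0.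
    apply Rmult_le_reg_r with (2 * (1 + a * Q0)); [nra|].
    unfold Rdiv. rewrite Rmult_assoc, Rinv_l, Rmult_1_r by nra.
    apply Rmult_le_reg_r with (1 + a * Q); [nra|].
    assert (c * Q0 * (1 + a * Q) <= c * Q * (1 + a * Q0)) by nra.
    assert (c * Q * (1 + a * Q0) <= 2 * (1 + a * Q) * Y * (1 + a * Q0))
      by (apply Rmult_le_compat_r; nra).
    nra. }
  unfold Y in HCY. lra.
Qed.

Section LimitInequalities.

Variables (n : Z) (alpha kappa R0 : R) (s : nat -> R -> R).
Hypotheses (Ha : 0 < alpha) (HR : 0 < R0) (Hs : Hseq R0 s).

Let Hp : forall k, preH R0 (s k).
Proof. apply Hs. Qed.

Let HQ : is_lim_seq (fun k => normH2 R0 (s k)) (limH (normH2 R0) s).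
Proof. apply is_lim_seq_limH, ex_lim_normH2; auto. Qed.

Let HB : is_lim_seq (fun k => mass R0 (s k)) (limH (mass R0) s).
Proof. apply is_lim_seq_limH, ex_lim_mass; auto. Qed.

Let HN1 : is_lim_seq (fun k => wint R0 (sat alpha 1) (s k)) (limH (wint R0 (sat alpha 1)) s).
Proof. apply is_lim_seq_limH, ex_lim_sat; auto; lra. Qed.

Let HNp :
  is_lim_seq (fun k => wint R0 (sat_deriv alpha) (s k)) (limH (wint R0 (sat_deriv alpha)) s).
Proof. apply is_lim_seq_limH, ex_lim_sat_deriv; auto. Qed.

Lemma limH_coercive c : (forall u, preH R0 u ->
    c * normH2 R0 u <= quad_part n alpha kappa R0 u + 2 * / alpha * mass R0 u) ->
  c * limH (normH2 R0) s
  <= 2 * gammaH n alpha kappa R0 s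
     + 2 * / alpha * (limH (mass R0) s - limH (wint R0 (sat alpha 1)) s).
Proof.
  intros Hcoer. rewrite (gammaH_eq n alpha kappa R0 s Ha HR Hs).
  pose proof (is_lim_seq_limH _ _ (ex_lim_quad_part n alpha kappa R0 s HR Hs)).
  apply Rle_trans
    with (limH (quad_part n alpha kappa R0) s + 2 * / alpha * limH (mass R0) s); [|lra].
  apply (is_lim_seq_le (fun k => c * normH2 R0 (s k))
           (fun k => quad_part n alpha kappa R0 (s k) + 2 * / alpha * mass R0 (s k))
           (c * limH (normH2 R0) s)
           (limH (quad_part n alpha kappa R0) s + 2 * / alpha * limH (mass R0) s));
    [intros; apply Hcoer, Hp | lim_combo | lim_combo].
Qed.

Lemma limH_mass_sub_sat_le_sqr :
  limH (mass R0) s - limH (wint R0 (sat alpha 1)) s <= alpha * R0 ^ 2 * limH (normH2 R0) s ^ 2.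
Proof.
  apply (is_lim_seq_le (fun k => mass R0 (s k) - wint R0 (sat alpha 1) (s k))
           (fun k => alpha * R0 ^ 2 * (normH2 R0 (s k) * (normH2 R0 (s k) * 1)))
           (limH (mass R0) s - limH (wint R0 (sat alpha 1)) s)
           (alpha * R0 ^ 2 * (limH (normH2 R0) s * (limH (normH2 R0) s * 1)))).
  - intros k. apply (mass_sub_sat_le_sqr R0 alpha (s k) HR Ha (Hp k)).
  - lim_combo.
  - lim_combo.
Qed.

Lemma limH_mass_sub_sat_le_deriv :
  limH (mass R0) s - limH (wint R0 (sat alpha 1)) s
  <= (1 + alpha * limH (normH2 R0) s)
     * (limH (wint R0 (sat alpha 1)) s - limH (wint R0 (sat_deriv alpha)) s).
Proof.
  apply (is_lim_seq_le (fun k => mass R0 (s k) - wint R0 (sat alpha 1) (s k))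
           (fun k => (1 + alpha * normH2 R0 (s k))
                     * (wint R0 (sat alpha 1) (s k) - wint R0 (sat_deriv alpha) (s k)))
           (limH (mass R0) s - limH (wint R0 (sat alpha 1)) s)
           ((1 + alpha * limH (normH2 R0) s)
            * (limH (wint R0 (sat alpha 1)) s - limH (wint R0 (sat_deriv alpha)) s))).
  - intros k. apply (mass_sub_sat_le_deriv R0 alpha (s k) HR Ha (Hp k)).
  - lim_combo.
  - lim_combo.
Qed.

Lemma limH_normH2_pos : H_nonzero R0 s -> 0 < limH (normH2 R0) s.
Proof.
  intros Hnz.
  assert (Hge : 0 <= limH (normH2 R0) s).
  { apply (is_lim_seq_le (fun _ => 0) (fun k => normH2 R0 (s k)) 0 (limH (normH2 R0) s));
      auto using is_lim_seq_const.
    intros k. apply normH2_ge0; auto. }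
  destruct (Rle_lt_or_eq_dec _ _ Hge) as [Hlt|Heq]; [exact Hlt|].
  exfalso. apply Hnz. rewrite Heq. exact HQ.
Qed.

End LimitInequalities.

Theorem lemma4p3 (r0 : R) (n : Z) (alpha R0 kappa : R) :
  first_pos_zero_J0 r0 ->
  (1 <= Z.abs n)%Z ->
  0 < alpha -> 0 < R0 ->
  - ((r0 ^ 2 + (IZR n) ^ 2) / (2 * R0 ^ 2)) < kappa ->
  kappa < / alpha - (r0 ^ 2 + (IZR n) ^ 2) / (2 * R0 ^ 2) ->
  exists C2 : R, 0 < C2 /\
    forall s : nat -> R -> R, in_M n alpha kappa R0 s ->
      dgamma_u_u n alpha kappa R0 s < - C2.
Proof.
  intros Hr0 Hn Ha HR Hk _.
  destruct (coercivity r0 n alpha kappa R0 Hr0 Hn HR Hk) as [c [Hc Hcoer]].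
  exists (nehari_const c alpha R0). split; [apply nehari_const_pos; auto|].
  intros s [Hs [Hnz Hg]].
  pose proof (limH_coercive n alpha kappa R0 s Ha HR Hs c Hcoer) as Hgap.
  rewrite Hg in Hgap.
  rewrite (dgamma_u_u_eq n alpha kappa R0 s Ha HR Hs), Hg, Rmult_0_r, Rminus_0_l.
  apply (nehari_gap c alpha R0 (limH (normH2 R0) s) (limH (mass R0) s)); auto.
  - apply limH_normH2_pos; auto.
  - lra.
  - apply limH_mass_sub_sat_le_sqr; auto.
  - apply limH_mass_sub_sat_le_deriv; auto.
Qed.
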